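(* If $(\Phi,D)$ is a labeled continuous information algebra, then its associated domain-free information algebra $(\Phi/\sigma,D)$ is a domain-free continuous information algebra.
   Context: A labeled information algebra $(\Phi,D)$ consists of a lattice $D$, a set $\Phi$ with labeling $d:\Phi\to D$, combination $\otimes$ and marginalization $\phi^{\downarrow x}$ for $x\le d(\phi)$, such that: $\otimes$ is associative and commutative; for each $s\in D$ there is $e_s$ with $d(e_s)=s$ and $e_s\otimes\phi=\phi$ whenever $d(\phi)=s$; $d(\phi\otimes\psi)=d(\phi)\vee d(\psi)$; $d(\phi^{\downarrow x})=x$; $(\phi^{\downarrow y})^{\downarrow x}=\phi^{\downarrow x}$ for $x\le y\le d(\phi)$; $(\phi\otimes\psi)^{\downarrow x}=\phi\otimes\psi^{\downarrow x\wedge y}$ when $d(\phi)=x$, $d(\psi)=y$; $e_y^{\downarrow x}=e_x$ for $x\le y$; $\phi\otimes\phi^{\downarrow x}=\phi$. In any (labeled or domain-free) information algebra, $\psi\le\phi$ iff $\psi\otimes\phi=\phi$; suprema refer to this order; $a\ll b$ means: for every directed $X$ with $b\le\vee X$ there is $c\in X$ with $a\le c$. $\Phi_x=\{\phi:d(\phi)=x\}$ and $\ll_x$ is the way-below relation in $(\Phi_x,\le)$. $(\Phi,D)$ is labeled continuous if $D$ has a top element and there are sets $\Gamma_x\subseteq\Phi_x$ ($x\in D$), closed under combination and containing $e_x$, such that every directed $X\subseteq\Gamma_x$ has a supremum $\vee X\in\Phi_x$, and $\phi=\vee\{\psi\in\Gamma_x:\psi\ll_x\phi\}$ for all $\phi\in\Phi_x$.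 The associated domain-free algebra: for $y\ge d(\phi)$ let $\phi^{\uparrow y}=\phi\otimes e_y$; define $\phi\equiv\psi\pmod\sigma$ iff $\phi^{\uparrow d(\phi)\vee d(\psi)}=\psi^{\uparrow d(\phi)\vee d(\psi)}$; on $\Phi/\sigma$ set $[\phi]_\sigma\otimes[\psi]_\sigma=[\phi\otimes\psi]_\sigma$ and $[\phi]_\sigma^{\Rightarrow x}=[(\phi^{\uparrow x\vee d(\phi)})^{\downarrow x}]_\sigma$. A domain-free information algebra (a set with associative commutative combination with neutral element $e$ and focusing $\Rightarrow$ satisfying transitivity, combination, support and idempotency axioms) $(\Phi',D)$, with $D$ having a top element, is continuous if there exists $\Gamma\subseteq\Phi'$, closed under combination and containing $e$, such that every directed subset of $\Gamma$ has a supremum in $\Phi'$ and $\phi=\vee\{\psi\in\Gamma:\psi\ll\phi\}$ for all $\phi\in\Phi'$. *)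

From HB Require Import structures.
From mathcomp Require Import all_boot all_order.
From Stdlib Require Import ClassicalEpsilon.
Unset Implicit Arguments.
Import Order.Theory.
Local Open Scope order_scope.

Section OrderNotions.
Variables (T : Type) (P : T -> Prop) (le : T -> T -> Prop).

Definition directed (X : T -> Prop) : Prop :=
  (exists a, X a) /\
  (forall a b, X a -> X b -> exists c, X c /\ le a c /\ le b c).

Definition is_sup_in (X : T -> Prop) (s : T) : Prop :=
  P s /\ (forall a, X a -> le a s) /\
  (forall u, P u -> (forall a, X a -> le a u) -> le s u).

Definition way_below_in (a b : T) : Prop :=
  forall X : T -> Prop, (forall c, X c -> P c) -> directed X ->
  forall s, is_sup_in X s -> le b s -> exists c, X c /\ le a c.
End OrderNotions.

(* [d] labeling, [comb] combination, [marg phi x] marginalization      *)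
(* (only meaningful for x <= d phi; a total function), [e s] neutral   *)
(* element of domain s.                                                *)
Section Labeled.
Variables (disp : Order.disp_t) (D : latticeType disp) (Phi : Type)
  (d : Phi -> D) (comb : Phi -> Phi -> Phi) (marg : Phi -> D -> Phi)
  (e : D -> Phi).

Definition labeled_info_algebra : Prop :=
  (forall a b c, comb a (comb b c) = comb (comb a b) c) /\
  (forall a b, comb a b = comb b a) /\
  (forall s, d (e s) = s) /\
  (forall phi, comb (e (d phi)) phi = phi) /\
  (forall a b, d (comb a b) = d a `|` d b) /\
  (forall phi x, x <= d phi -> d (marg phi x) = x) /\
  (forall phi x y, x <= y -> y <= d phi -> marg (marg phi y) x = marg phi x) /\
  (forall phi psi x y, d phi = x -> d psi = y ->
      marg (comb phi psi) x = comb phi (marg psi (x `&` y))) /\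
  (forall x y, x <= y -> marg (e y) x = e x) /\
  (forall phi x, x <= d phi -> comb phi (marg phi x) = phi).

Definition info_le (psi phi : Phi) : Prop := comb psi phi = phi.

Definition Phi_at (x : D) : Phi -> Prop := fun phi => d phi = x.

Definition labeled_continuous : Prop :=
  (exists top : D, forall x, x <= top) /\
  exists Gamma : D -> Phi -> Prop,
    (forall x psi, Gamma x psi -> Phi_at x psi) /\
    (forall x a b, Gamma x a -> Gamma x b -> Gamma x (comb a b)) /\
    (forall x, Gamma x (e x)) /\
    (forall x (X : Phi -> Prop), (forall a, X a -> Gamma x a) ->
        directed Phi info_le X -> exists s, is_sup_in Phi (Phi_at x) info_le X s) /\
    (forall x phi, Phi_at x phi ->
        is_sup_in Phi (Phi_at x) info_le
          (fun psi => Gamma x psi /\ way_below_in Phi (Phi_at x) info_le psi phi)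
          phi).

Definition vacuous_ext (phi : Phi) (y : D) : Phi := comb phi (e y).

Definition sigma (phi psi : Phi) : Prop :=
  vacuous_ext phi (d phi `|` d psi) = vacuous_ext psi (d phi `|` d psi).

Definition cls (phi : Phi) : Phi -> Prop := fun psi => sigma phi psi.

Definition quot : Type := { S : Phi -> Prop | exists phi, S = cls phi }.

Definition qcls (phi : Phi) : quot := exist _ (cls phi) (ex_intro _ phi erefl).

Definition repr (A : quot) : Phi :=
  proj1_sig (constructive_indefinite_description _ (proj2_sig A)).

Definition qcomb (A B : quot) : quot := qcls (comb (repr A) (repr B)).

Definition qfocus (A : quot) (x : D) : quot :=
  let phi := repr A in qcls (marg (vacuous_ext phi (x `|` d phi)) x).

Definition qneutral (top : D) : quot := qcls (e top).
End Labeled.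

Section DomainFree.
Variables (disp : Order.disp_t) (D : latticeType disp) (Psi : Type)
  (comb : Psi -> Psi -> Psi) (e : Psi) (focus : Psi -> D -> Psi).

Definition df_info_algebra : Prop :=
  (forall a b c, comb a (comb b c) = comb (comb a b) c) /\
  (forall a b, comb a b = comb b a) /\
  (forall a, comb e a = a) /\
  (forall phi x y, focus (focus phi x) y = focus phi (x `&` y)) /\
  (forall phi psi x, focus (comb (focus phi x) psi) x =
                     comb (focus phi x) (focus psi x)) /\
  (forall phi, exists x, focus phi x = phi) /\
  (forall phi x, comb phi (focus phi x) = phi).

Definition df_le (psi phi : Psi) : Prop := comb psi phi = phi.

Definition all_Psi : Psi -> Prop := fun _ => True.

Definition df_continuous : Prop :=
  (exists top : D, forall x, x <= top) /\
  exists Gamma : Psi -> Prop,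
    (forall a b, Gamma a -> Gamma b -> Gamma (comb a b)) /\
    Gamma e /\
    (forall X : Psi -> Prop, (forall a, X a -> Gamma a) ->
        directed Psi df_le X -> exists s, is_sup_in Psi all_Psi df_le X s) /\
    (forall phi, is_sup_in Psi all_Psi df_le
        (fun psi => Gamma psi /\ way_below_in Psi all_Psi df_le psi phi) phi).
End DomainFree.

(* The map [A |-> repr A (x) e_top], sending a class to the vacuous extension
   of any of its representatives to the top domain, is a bijection from
   [Phi/sigma] onto [Phi_top].  It carries combination to combination, the
   neutral class to [e_top], focusing on [x] to [psi |-> (psi^{down x})^{up top}],
   and hence the information order of the quotient to that of [Phi_top].  The
   domain-free axioms thus become identities of the labeled algebra at [top],
   and continuity of the quotient is that of [Phi_top] with basis [Gamma_top]. *)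
From Pilot Require Import Defs.
From mathcomp Require Import all_boot all_order.
From Stdlib Require Import ClassicalEpsilon FunctionalExtensionality.
From Stdlib Require Import PropExtensionality ProofIrrelevance.
Set Implicit Arguments.
Unset Strict Implicit.
Import Order.Theory.
Local Open Scope order_scope.

Lemma way_below_in_le (T : Type) (P : T -> Prop) (le : T -> T -> Prop) (a b : T) :
  (forall c, le c c) -> P b -> way_below_in T P le a b -> le a b.
Proof.
move=> le_refl Pb wb_ab.
have singleton_sup : is_sup_in T P le (eq^~ b) b.
  by split=> //; split=> [_ -> | u _]; [exact: le_refl | apply].
have singleton_directed : directed T le (eq^~ b).
  by split=> [|_ _ -> ->]; exists b => //; split=> //; split; exact: le_refl.
have singleton_P : forall c, c = b -> P c by move=> c ->.
by have [_ [-> //]] := wb_ab _ singleton_P singleton_directed b singleton_sup (le_refl b).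
Qed.

Section LabeledAlgebra.
Variables (disp : Order.disp_t) (D : latticeType disp) (Phi : Type)
  (d : Phi -> D) (comb : Phi -> Phi -> Phi) (marg : Phi -> D -> Phi)
  (e : D -> Phi).
Hypothesis algebra : labeled_info_algebra disp D Phi d comb marg e.

Lemma combA a b c : comb a (comb b c) = comb (comb a b) c.
Proof. by have [ax _] := algebra; apply: ax. Qed.

Lemma combC a b : comb a b = comb b a.
Proof. by have [_ [ax _]] := algebra; apply: ax. Qed.

Lemma d_neutral s : d (e s) = s.
Proof. by have [_ [_ [ax _]]] := algebra; apply: ax. Qed.

Lemma comb_neutral_dom phi : comb (e (d phi)) phi = phi.
Proof. by have [_ [_ [_ [ax _]]]] := algebra; apply: ax. Qed.

Lemma d_comb a b : d (comb a b) = d a `|` d b.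
Proof. by have [_ [_ [_ [_ [ax _]]]]] := algebra; apply: ax. Qed.

Lemma d_marg phi x : x <= d phi -> d (marg phi x) = x.
Proof. by have [_ [_ [_ [_ [_ [ax _]]]]]] := algebra; apply: ax. Qed.

Lemma marg_marg phi x y : x <= y -> y <= d phi -> marg (marg phi y) x = marg phi x.
Proof. by have [_ [_ [_ [_ [_ [_ [ax _]]]]]]] := algebra; apply: ax. Qed.

Lemma marg_comb phi psi x y : d phi = x -> d psi = y ->
  marg (comb phi psi) x = comb phi (marg psi (x `&` y)).
Proof. by have [_ [_ [_ [_ [_ [_ [_ [ax _]]]]]]]] := algebra; apply: ax. Qed.

Lemma marg_neutral x y : x <= y -> marg (e y) x = e x.
Proof. by have [_ [_ [_ [_ [_ [_ [_ [_ [ax _]]]]]]]]] := algebra; apply: ax. Qed.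

Lemma comb_marg phi x : x <= d phi -> comb phi (marg phi x) = phi.
Proof. by have [_ [_ [_ [_ [_ [_ [_ [_ [_ ax]]]]]]]]] := algebra; apply: ax. Qed.

Lemma comb_neutralxx s : comb (e s) (e s) = e s.
Proof. by have := comb_neutral_dom (e s); rewrite d_neutral. Qed.

Lemma comb_neutral_le u w : u <= w -> comb (e u) (e w) = e w.
Proof.
move=> le_uw; have := @comb_marg (e w) u; rewrite d_neutral => /(_ le_uw).
by rewrite marg_neutral // combC.
Qed.

Lemma marg_vacuous phi u w : d phi <= u -> u <= w ->
  marg (comb phi (e w)) u = comb phi (e u).
Proof.
move=> le_phi_u le_uw.
rewrite -(comb_neutral_le le_uw) combA.
have d_ext : d (comb phi (e u)) = u by rewrite d_comb d_neutral join_r.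
rewrite (marg_comb d_ext (d_neutral w)) meet_l // marg_neutral //.
by rewrite -combA comb_neutralxx.
Qed.

Lemma marg_dom phi : marg phi (d phi) = phi.
Proof.
have ext_dom : comb phi (e (d phi)) = phi by rewrite combC comb_neutral_dom.
have := marg_comb (erefl (d phi)) (d_neutral (d phi)).
by rewrite meetxx marg_neutral // !ext_dom.
Qed.

Lemma comb_idem phi : comb phi phi = phi.
Proof. by have := comb_marg (lexx (d phi)); rewrite marg_dom. Qed.

Lemma vacuous_join phi y : comb phi (e (d phi `|` y)) = comb phi (e y).
Proof.
rewrite -(comb_neutral_le (leUr y (d phi))) combA.
have -> : d phi `|` y = d (comb phi (e y)) by rewrite d_comb d_neutral.
by rewrite combC comb_neutral_dom.
Qed.

Section TopDomain.
Variable top : D.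
Hypothesis le_top : forall x, x <= top.

Local Notation ext_top phi := (comb phi (e top)).
Local Notation sigma := (Defs.sigma disp D Phi d comb e).
Local Notation Q := (quot disp D Phi d comb e).
Local Notation qcls := (Defs.qcls disp D Phi d comb e).
Local Notation repr := (Defs.repr disp D Phi d comb e).
Local Notation qcomb := (Defs.qcomb disp D Phi d comb e).
Local Notation qfocus := (Defs.qfocus disp D Phi d comb marg e).
Local Notation qneutral := (Defs.qneutral disp D Phi d comb e top).
Local Notation df_le := (df_le Q qcomb).
Local Notation info_le := (info_le Phi comb).
Local Notation Phi_top := (Phi_at disp D Phi d top).

Lemma d_ext_top phi : d (ext_top phi) = top.
Proof. by rewrite d_comb d_neutral join_r. Qed.

Lemma ext_top_id phi : d phi = top -> ext_top phi = phi.
Proof. by move=> <-; rewrite combC comb_neutral_dom. Qed.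

Lemma ext_top_comb a b : ext_top (comb a b) = comb (ext_top a) (ext_top b).
Proof.
rewrite -!combA; congr comb.
by rewrite [comb (e top) _]combC -combA comb_neutralxx.
Qed.

Lemma ext_top_comb_neutral y phi : ext_top (comb (e y) phi) = ext_top phi.
Proof. by rewrite -combA [comb phi _]combC combA comb_neutral_le // combC. Qed.

Lemma sigmaE a b : sigma a b <-> ext_top a = ext_top b.
Proof.
rewrite /Defs.sigma /vacuous_ext; split=> [eq_ab | eq_top].
- by rewrite -(comb_neutral_le (le_top (d a `|` d b))) !combA eq_ab.
- rewrite -(marg_vacuous (leUl _ _) (le_top _)).
  by rewrite -(marg_vacuous (leUr _ _) (le_top _)) eq_top.
Qed.

Definition rep_top (A : Q) : Phi := ext_top (repr A).

Lemma cls_repr (A : Q) : proj1_sig A = cls disp D Phi d comb e (repr A).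
Proof. by rewrite /Defs.repr; case: constructive_indefinite_description. Qed.

Lemma rep_top_qcls phi : rep_top (qcls phi) = ext_top phi.
Proof.
have sigma_repr : sigma phi (repr (qcls phi)).
  by rewrite -[sigma phi]/(proj1_sig (qcls phi)) cls_repr.
by apply/esym/sigmaE.
Qed.

Lemma rep_top_inj : injective rep_top.
Proof.
move=> A B eq_AB; apply: eq_sig_hprop => [? ? ?|]; first exact: proof_irrelevance.
rewrite !cls_repr; apply: functional_extensionality => phi.
by apply: propositional_extensionality; rewrite /cls !sigmaE -!/(rep_top _) eq_AB.
Qed.

Lemma d_rep_top A : d (rep_top A) = top.
Proof. exact: d_ext_top. Qed.

Lemma rep_top_qcls_top phi : d phi = top -> rep_top (qcls phi) = phi.
Proof. by move=> d_phi; rewrite rep_top_qcls ext_top_id. Qed.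

Lemma rep_top_qcomb A B : rep_top (qcomb A B) = comb (rep_top A) (rep_top B).
Proof. by rewrite rep_top_qcls ext_top_comb. Qed.

Lemma rep_top_qneutral : rep_top qneutral = e top.
Proof. by rewrite rep_top_qcls comb_neutralxx. Qed.

Lemma rep_top_qfocus A x : rep_top (qfocus A x) = ext_top (marg (rep_top A) x).
Proof.
rewrite rep_top_qcls /vacuous_ext /rep_top; set r := repr A.
have le_join_top : x `|` d r <= d (ext_top r) by rewrite d_ext_top le_top.
by rewrite -(marg_marg (leUl _ _) le_join_top) (marg_vacuous (leUr _ x) (le_top _)).
Qed.

Lemma df_leE A B : df_le A B <-> info_le (rep_top A) (rep_top B).
Proof.
rewrite /Defs.df_le /Defs.info_le -rep_top_qcomb.
by split=> [-> | /rep_top_inj].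
Qed.

Lemma focus_top_trans phi x y : d phi = top ->
  ext_top (marg (ext_top (marg phi x)) y) = ext_top (marg phi (x `&` y)).
Proof.
move=> d_phi; set psi := marg phi x.
have d_psi : d psi = x by rewrite d_marg ?d_phi.
have le_xy_top : x `|` y <= d (ext_top psi) by rewrite d_ext_top le_top.
have ext_psi : comb psi (e (x `|` y)) = comb psi (e y).
  by rewrite -{1}d_psi vacuous_join.
rewrite -(marg_marg (leUr y x) le_xy_top).
rewrite (marg_vacuous (u := x `|` y) _ (le_top _)) ?d_psi ?leUl //.
rewrite ext_psi [comb psi _]combC.
rewrite (marg_comb (d_neutral y) d_psi) marg_marg ?leIr ?d_phi //.
by rewrite ext_top_comb_neutral meetC.
Qed.

Lemma focus_top_comb phi psi x : d phi = top -> d psi = top ->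
  ext_top (marg (comb (ext_top (marg phi x)) psi) x) =
  comb (ext_top (marg phi x)) (ext_top (marg psi x)).
Proof.
move=> d_phi d_psi; set chi := marg phi x.
have d_chi : d chi = x by rewrite d_marg ?d_phi.
rewrite -combA -{1}d_psi comb_neutral_dom.
by rewrite (marg_comb d_chi d_psi) meet_l // ext_top_comb.
Qed.

Lemma quot_df_info_algebra : df_info_algebra disp D Q qcomb qneutral qfocus.
Proof.
split; first by move=> *; apply: rep_top_inj; rewrite !rep_top_qcomb combA.
split; first by move=> *; apply: rep_top_inj; rewrite !rep_top_qcomb combC.
split.
  move=> A; apply: rep_top_inj.
  by rewrite rep_top_qcomb rep_top_qneutral -(d_rep_top A) comb_neutral_dom.
split.
  move=> A x y; apply: rep_top_inj.
  by rewrite !rep_top_qfocus focus_top_trans ?d_rep_top.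
split.
  move=> A B x; apply: rep_top_inj.
  by rewrite !(rep_top_qfocus, rep_top_qcomb) focus_top_comb ?d_rep_top.
split.
  move=> A; exists top; apply: rep_top_inj.
  by rewrite rep_top_qfocus -{1}(d_rep_top A) marg_dom ext_top_id ?d_rep_top.
move=> A x; apply: rep_top_inj.
rewrite rep_top_qcomb rep_top_qfocus combA comb_marg ?d_rep_top //.
by rewrite ext_top_id ?d_rep_top.
Qed.

Definition rep_top_image (X : Q -> Prop) : Phi -> Prop :=
  fun phi => exists A, X A /\ phi = rep_top A.

Lemma rep_top_image_top X phi : rep_top_image X phi -> Phi_top phi.
Proof. by case=> A [_ ->]; exact: d_rep_top. Qed.

Lemma directed_rep_top_image X :
  directed Q df_le X -> directed Phi info_le (rep_top_image X).
Proof.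
case=> [[A XA] updir]; split; first by exists (rep_top A), A.
move=> _ _ [A1 [XA1 ->]] [A2 [XA2 ->]].
have [C [XC [le1 le2]]] := updir A1 A2 XA1 XA2.
by exists (rep_top C); split; [exists C | split; apply/df_leE].
Qed.

Lemma is_sup_rep_top_image X S :
  is_sup_in Q (all_Psi Q) df_le X S <->
  is_sup_in Phi Phi_top info_le (rep_top_image X) (rep_top S).
Proof.
split=> [[_ [ub lub]] | [_ [ub lub]]].
- split; first exact: d_rep_top.
  split=> [_ [A [XA ->]] | phi d_phi ub_phi]; first by apply/df_leE/ub.
  rewrite -(rep_top_qcls_top d_phi); apply/df_leE/lub => // A XA.
  by apply/df_leE; rewrite rep_top_qcls_top //; apply: ub_phi; exists A.
- split=> //; split=> [A XA | U _ ub_U]; apply/df_leE.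
    by apply: ub; exists A.
  by apply: lub; [exact: d_rep_top | move=> _ [A [XA ->]]; apply/df_leE/ub_U].
Qed.

Lemma way_below_rep_top A B :
  way_below_in Phi Phi_top info_le (rep_top A) (rep_top B) ->
  way_below_in Q (all_Psi Q) df_le A B.
Proof.
move=> wb X _ dirX S /is_sup_rep_top_image supS /df_leE le_BS.
have [_ [[C [XC ->]] le_AC]] :=
  wb _ (@rep_top_image_top X) (directed_rep_top_image dirX) _ supS le_BS.
by exists C; split=> //; apply/df_leE.
Qed.

Lemma quot_df_continuous :
  labeled_continuous disp D Phi d comb e -> df_continuous disp D Q qcomb qneutral.
Proof.
case=> _ [G [G_top [G_comb [G_neutral [G_sup G_basis]]]]].
split; first by exists top.
exists (fun A => G top (rep_top A)).
split; first by move=> A B GA GB; rewrite rep_top_qcomb; exact: G_comb.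
split; first by rewrite rep_top_qneutral.
split.
  move=> X GX dirX.
  have G_image : forall phi, rep_top_image X phi -> G top phi.
    by move=> _ [A [XA ->]]; exact: GX.
  have [s sup_s] := G_sup top _ G_image (directed_rep_top_image dirX).
  have d_s : d s = top by case: sup_s.
  by exists (qcls s); apply/is_sup_rep_top_image; rewrite rep_top_qcls_top.
move=> A; apply/is_sup_rep_top_image.
have [_ [ub lub]] := G_basis top _ (d_rep_top A).
split; first exact: d_rep_top.
split=> [_ [B [[_ wbB] ->]] | phi d_phi ub_phi].
  by apply/df_leE/(way_below_in_le _ _ wbB) => // C; apply/df_leE/comb_idem.
apply: lub => // psi [Gpsi wb_psi].
have d_psi := G_top _ _ Gpsi.
rewrite -(rep_top_qcls_top d_psi); apply: ub_phi; exists (qcls psi).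
by split=> //; split; [|apply: way_below_rep_top]; rewrite rep_top_qcls_top.
Qed.

End TopDomain.
End LabeledAlgebra.

Theorem theorem4p10 (disp : Order.disp_t) (D : latticeType disp) (Phi : Type)
  (d : Phi -> D) (comb : Phi -> Phi -> Phi) (marg : Phi -> D -> Phi)
  (e : D -> Phi) :
  labeled_info_algebra disp D Phi d comb marg e ->
  labeled_continuous disp D Phi d comb e ->
  forall top : D, (forall x : D, x <= top) ->
    df_info_algebra disp D (quot disp D Phi d comb e)
      (qcomb disp D Phi d comb e) (qneutral disp D Phi d comb e top)
      (qfocus disp D Phi d comb marg e) /\
    df_continuous disp D (quot disp D Phi d comb e)
      (qcomb disp D Phi d comb e) (qneutral disp D Phi d comb e top).
Proof.
move=> algebra continuous top le_top.
split; first exact: (quot_df_info_algebra algebra le_top).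
exact: (quot_df_continuous algebra le_top continuous).
Qed.
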